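(* Let $\mathcal{C}_1$ and $\mathcal{C}_2$ be nice GFG-tNCWs with $L(\mathcal{C}_1)=L(\mathcal{C}_2)$, each minimal (no GFG-tNCW for the same language has fewer states) and each $\alpha$-maximal up to homogeneity. Then $\mathcal{C}_1$ and $\mathcal{C}_2$ are isomorphic.
   Context: A tNCW is $\mathcal{A}=\langle\Sigma,Q,q_0,\delta,\alpha\rangle$: finite alphabet $\Sigma$, finite state set $Q$, initial state $q_0$, transition function $\delta:Q\times\Sigma\to 2^Q\setminus\{\emptyset\}$ with transition relation $\Delta=\{\langle q,\sigma,s\rangle:s\in\delta(q,\sigma)\}$, and $\alpha\subseteq\Delta$; $|\mathcal{A}|=|Q|$. $\alpha$-transitions are those in $\alpha$, $\bar\alpha$-transitions those in $\Delta\setminus\alpha$; $\delta^{\alpha}(q,\sigma)$, $\delta^{\bar\alpha}(q,\sigma)$ denote the $\sigma$-successors via $\alpha$-, resp. $\bar\alpha$-transitions. A run on $w=\sigma_1\sigma_2\cdots$ is $r_0r_1\cdots$ with $r_0=q_0$, $r_{i+1}\in\delta(r_i,\sigma_{i+1})$; accepting iff it traverses $\alpha$-transitions only finitely often; $L(\mathcal{A})$ is the accepted language. $\mathcal{A}^q$ is $\mathcal{A}$ with initial state $q$; $q\sim s$ iff $L(\mathcal{A}^q)=L(\mathcal{A}^s)$. $\mathcal{A}$ is GFG if there is $f:\Sigma^*\to Q$ with $f(\epsilon)=q_0$, $\langle f(u),\sigma,f(u\sigma)\rangle\in\Delta$ for all $u,\sigma$, and for every $w\in L(\mathcal{A})$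 the run $f(w[1,0]),f(w[1,1]),\dots$ is accepting; $q$ is GFG if $\mathcal{A}^q$ is. $\mathcal{A}$ is semantically deterministic if all $\sigma$-successors of any state are pairwise $\sim$-equivalent; safe deterministic if $|\delta^{\bar\alpha}(q,\sigma)|\le1$ always; normal if whenever a path of $\bar\alpha$-transitions leads from $q$ to $s$, one also leads from $s$ to $q$. Nice: all states reachable and GFG, and normal, safe deterministic, semantically deterministic. $\mathcal{A}$ is $\alpha$-homogenous if for all $q,\sigma$, $\delta^{\alpha}(q,\sigma)=\emptyset$ or $\delta^{\bar\alpha}(q,\sigma)=\emptyset$. A triple $\langle q,\sigma,s\rangle\in Q\times\Sigma\times Q$ is an allowed transition of $\mathcal{A}$ if there is $s'$ with $s\sim s'$ and $\langle q,\sigma,s'\rangle\in\Delta$. $\mathcal{A}$ is $\alpha$-maximal up to homogeneity if it is $\alpha$-homogenous and, for every $q\in Q$ and $\sigma\in\Sigma$ with $\delta^{\bar\alpha}(q,\sigma)=\emptyset$, every allowed transition in $\{q\}\times\{\sigma\}\times Q$ is in $\Delta$. For tNCWs $\mathcal{A},\mathcal{B}$, a bijection $\kappa:Q_\mathcal{A}\to Q_\mathcal{B}$ is $\bar\alpha$-transition respecting if for all $q,q',\sigma$: $q'\in\delta^{\bar\alpha}_\mathcal{A}(q,\sigma)$ iff $\kappa(q')\in\delta^{\bar\alpha}_\mathcal{B}(\kappa(q),\sigma)$, and $\alpha$-transition respecting if the same holds with $\delta^{\alpha}$. $\mathcal{A},\mathcal{B}$ are isomorphic if some bijection is both $\alpha$-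 and $\bar\alpha$-transition respecting. *)

From mathcomp Require Import all_boot.
Unset Printing Implicit Defensive.

Record tNCW (Sigma : finType) := TNCW {
  st : finType;
  q0 : st;
  delta : st -> Sigma -> {set st};
  alpha : st -> Sigma -> st -> bool;
  delta_ne : forall q a, delta q a != set0;
  alpha_sub : forall q a s, alpha q a s -> s \in delta q a
}.

Arguments q0 {Sigma}.
Arguments delta {Sigma t} : rename.
Arguments alpha {Sigma t} : rename.
Arguments st {Sigma}.

Section Defs.
Variable Sigma : finType.
Implicit Types A B : tNCW Sigma.

Definition word := nat -> Sigma.

Definition delta_a A (q : st A) (a : Sigma) : {set st A} :=
  [set s in delta q a | alpha q a s].
Definition delta_na A (q : st A) (a : Sigma) : {set st A} :=
  [set s in delta q a | ~~ alpha q a s].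

Definition with_init A (q : st A) : tNCW Sigma :=
  @TNCW Sigma (st A) q (@delta _ A) (@alpha _ A) (@delta_ne _ A) (@alpha_sub _ A).

(* runs: w = w 0, w 1, ... (w i is the letter sigma_{i+1}) *)
Definition is_run A (w : word) (r : nat -> st A) : Prop :=
  r 0 = q0 A /\ forall i, r i.+1 \in delta (r i) (w i).

Definition acc_seq A (w : word) (r : nat -> st A) : Prop :=
  exists N, forall i, N <= i -> ~~ alpha (r i) (w i) (r i.+1).

Definition lang A (w : word) : Prop :=
  exists r, is_run A w r /\ acc_seq A w r.

Definition st_equiv A (q s : st A) : Prop :=
  forall w, lang (with_init A q) w <-> lang (with_init A s) w.

(* w[1,i] is mkseq w i *)
Definition GFG A : Prop :=
  exists f : seq Sigma -> st A,
    [/\ f [::] = q0 A,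
        (forall u a, f (rcons u a) \in delta (f u) a) &
        (forall w, lang A w -> acc_seq A w (fun i => f (mkseq w i)))].

Definition GFG_state A (q : st A) : Prop := GFG (with_init A q).

Inductive reachable A : st A -> Prop :=
| reach0 : reachable A (q0 A)
| reachS q a s : reachable A q -> s \in delta q a -> reachable A s.

Definition sem_det A : Prop :=
  forall q a s s', s \in delta q a -> s' \in delta q a -> st_equiv A s s'.

Definition safe_det A : Prop :=
  forall q a, #|delta_na A q a| <= 1.

Definition na_edge A : rel (st A) :=
  fun q s => [exists a, s \in delta_na A q a].

Definition normal A : Prop :=
  forall q s, connect (na_edge A) q s -> connect (na_edge A) s q.

Definition nice A : Prop :=
  [/\ (forall q, reachable A q), (forall q, GFG_state A q),
      normal A, safe_det A & sem_det A].

Definition minimal_GFG A : Prop :=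
  forall B : tNCW Sigma, GFG B -> (forall w, lang B w <-> lang A w) ->
    #|st A| <= #|st B|.

Definition alpha_homogenous A : Prop :=
  forall q a, delta_a A q a = set0 \/ delta_na A q a = set0.

Definition allowed A (q : st A) (a : Sigma) (s : st A) : Prop :=
  exists s', st_equiv A s s' /\ s' \in delta q a.

Definition alpha_max_up_to_hom A : Prop :=
  alpha_homogenous A /\
  forall q a, delta_na A q a = set0 -> forall s, allowed A q a s -> s \in delta q a.

Definition isomorphic A B : Prop :=
  exists kappa : st A -> st B,
    [/\ bijective kappa,
        (forall q q' a, q' \in delta_na A q a <-> kappa q' \in delta_na B (kappa q) a) &
        (forall q q' a, q' \in delta_a A q a <-> kappa q' \in delta_a B (kappa q) a)].

End Defs.

Arguments delta_a {Sigma}. Arguments delta_na {Sigma}. Arguments with_init {Sigma}.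
Arguments is_run {Sigma}. Arguments acc_seq {Sigma}. Arguments lang {Sigma}.
Arguments st_equiv {Sigma}. Arguments GFG {Sigma}. Arguments GFG_state {Sigma}.
Arguments reachable {Sigma}. Arguments sem_det {Sigma}. Arguments safe_det {Sigma}.
Arguments na_edge {Sigma}. Arguments normal {Sigma}. Arguments nice {Sigma}.
Arguments minimal_GFG {Sigma}. Arguments alpha_homogenous {Sigma}.
Arguments allowed {Sigma}. Arguments alpha_max_up_to_hom {Sigma}.
Arguments isomorphic {Sigma}.

(* Compare states p, q (possibly of different automata) by p <= q when they have the same
   language and every word that p reads along safe (non-alpha) transitions is also safely
   readable from q; p and q are strongly equivalent when p <= q <= p.

   In a semantically and safe deterministic GFG-tNCW A, a set R of states that dominates every
   state and is closed under safe transitions up to strong equivalence carries a GFG-tNCW for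
   L(A) with state set R: move to any state of R with the right residual language, safely when
   a safe transition of A to a strongly equivalent state exists.  If A is minimal, R is thus
   all of A; in particular strongly equivalent states of A coincide.

   Every state p of a nice automaton is <= some state of any equivalent GFG-tNCW B: otherwise,
   by normality, each prefix reaching p extends by a safe cycle at p that leaves the safe
   language of the state chosen by B's strategy, and repeating such cycles forever gives a word
   of L(A) on which that strategy takes infinitely many alpha-transitions.  Going from a
   <=-maximal state of C1 to C2 and back shows that every state of C1 is strongly equivalent to
   a state of C2.  The resulting map is injective, hence bijective by minimality; safe
   determinism makes it respect safe transitions, and under alpha-maximality up to homogeneity
   alpha-transitions depend on languages only, so they are respected as well. *)

From mathcomp Require Import all_boot boolp.
Unset Printing Implicit Defensive.
Set Implicit Arguments.
Unset Strict Implicit.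

Section Words.
Variable Sigma : finType.
Implicit Types (w : word Sigma) (x : seq Sigma).

Definition scons (a : Sigma) w : word Sigma := fun n => if n is n'.+1 then w n' else a.
Definition wcat x w : word Sigma := foldr scons w x.
Definition shift k w : word Sigma := fun n => w (k + n).

Lemma shift0 w : shift 0 w = w.
Proof. exact: funext. Qed.

Lemma shiftS k w : shift k w = scons (w k) (shift k.+1 w).
Proof. by apply: funext => -[|n]; rewrite /shift /= ?addn0 ?addSnnS. Qed.

Lemma wcat_mkseq_shift k w : wcat (mkseq w k) (shift k w) = w.
Proof.
elim: k => [|k IH]; first by apply: funext => n.
by rewrite mkseqS /wcat foldr_rcons -/(wcat _ _) -shiftS.
Qed.

Lemma mkseqD w k m : mkseq w (k + m) = mkseq w k ++ mkseq (shift k w) m.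
Proof. by elim: m => [|m IH]; rewrite ?addn0 ?cats0 // addnS !mkseqS IH rcons_cat. Qed.

Lemma mkseq_shift_cat w x y :
  mkseq w (size (x ++ y)) = x ++ y -> mkseq (shift (size x) w) (size y) = y.
Proof.
move=> wxy; have := drop_size_cat (mkseq (shift (size x) w) (size y)) (size_mkseq w (size x)).
by rewrite -mkseqD -size_cat wxy drop_size_cat.
Qed.

End Words.

Section Runs.
Variables (Sigma : finType) (A : tNCW Sigma).
Implicit Types (p q s : st A) (a : Sigma) (w : word Sigma) (x y : seq Sigma).

Definition lang_at q w := lang (with_init A q) w.

Lemma lang_at_cons q s a w : s \in delta q a -> lang_at s w -> lang_at q (scons a w).
Proof.
move=> qs [r [[r0 rS] [N accN]]].
exists (fun n => if n is n'.+1 then r n' else q); split; first split => //.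
  by case=> [|i] /=; [rewrite r0 | apply: rS].
by exists N.+1 => -[|i] //= /accN.
Qed.

Lemma lang_at_uncons q a w : lang_at q (scons a w) -> exists2 s, s \in delta q a & lang_at s w.
Proof.
move=> [r [[r0 rS] [N accN]]]; exists (r 1); first by have := rS 0; rewrite r0.
exists (fun n => r n.+1); split; first by split.
by exists N => i iN; apply: accN; apply: leq_trans iN _.
Qed.

Hypothesis sdA : sem_det A.

Lemma lang_at_residual q s a w : s \in delta q a -> lang_at s w <-> lang_at q (scons a w).
Proof.
move=> qs; split; first exact: lang_at_cons.
by case/lang_at_uncons => s' qs' /(sdA qs' qs w).1.
Qed.

Fixpoint run_on q x q' : Prop :=
  if x is a :: x' then exists2 s, s \in delta q a & run_on s x' q' else q = q'.

Lemma run_on_cat q q1 q2 x y : run_on q x q1 -> run_on q1 y q2 -> run_on q (x ++ y) q2.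
Proof.
elim: x q => [|a x IH] q /=; first by move=> ->.
by case=> s qs xs ys; exists s => //; apply: IH ys.
Qed.

Lemma run_on_rcons q q' s x a : run_on q x q' -> s \in delta q' a -> run_on q (rcons x a) s.
Proof. by move=> xq' q's; rewrite -cats1; apply: run_on_cat xq' _; exists s. Qed.

Lemma run_on_lang q x q' w : run_on q x q' -> lang_at q' w -> lang_at q (wcat x w).
Proof.
elim: x q => [|a x IH] q /=; first by move=> ->.
by case=> s qs xs /(IH _ xs); apply: lang_at_cons.
Qed.

Lemma run_on_residual q x q' w : run_on q x q' -> lang_at q (wcat x w) -> lang_at q' w.
Proof.
elim: x q => [|a x IH] q /=; first by move=> ->.
by case=> s qs xs /(lang_at_residual _ qs).2; apply: IH.
Qed.

Lemma reachable_run_on q : reachable A q -> exists x, run_on (q0 A) x q.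
Proof.
elim=> [|q1 a s _ [x xq1] q1s]; first by exists [::].
by exists (rcons x a); apply: run_on_rcons xq1 q1s.
Qed.

Lemma strategy_run_on (f : seq Sigma -> st A) :
  (forall u a, f (rcons u a) \in delta (f u) a) -> forall u, run_on (f [::]) u (f u).
Proof. by move=> fS; elim/last_ind => [|u a IH] //; apply: run_on_rcons IH _. Qed.

End Runs.

Section SafePaths.
Variables (Sigma : finType) (A : tNCW Sigma).
Implicit Types (p q s : st A) (a : Sigma) (w : word Sigma) (x y : seq Sigma).

Lemma delta_na_delta q a s : s \in delta_na A q a -> s \in delta q a.
Proof. by rewrite inE => /andP[]. Qed.

Lemma delta_na_alpha q a s : s \in delta_na A q a -> ~~ alpha q a s.
Proof. by rewrite inE => /andP[]. Qed.

Fixpoint safe_path q x q' : Prop :=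
  if x is a :: x' then exists2 s, s \in delta_na A q a & safe_path s x' q' else q = q'.

Definition safe_word q x := exists q', safe_path q x q'.

Lemma delta_na_eq0 q a : delta_na A q a = set0 <-> ~ safe_word q [:: a].
Proof.
split=> [na0 [_ [s qs _]]|no_safe]; first by rewrite na0 inE in qs.
by apply/eqP; rewrite -subset0; apply/subsetP => s qs; case: no_safe; exists s; exists s.
Qed.

Lemma delta_na_eq0_delta_a q a s :
  delta_na A q a = set0 -> s \in delta q a -> s \in delta_a A q a.
Proof.
move=> na0 qs; rewrite inE qs /=; apply: contraT => s_safe.
have : s \in delta_na A q a by rewrite inE qs s_safe.
by rewrite na0 inE.
Qed.

Lemma safe_path_cat q q2 x y :
  safe_path q (x ++ y) q2 <-> exists2 q1, safe_path q x q1 & safe_path q1 y q2.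
Proof.
elim: x q => [|a x IH] q /=; first by split=> [|[_ <-]]; [exists q|].
split=> [[s qs /IH[q1 xq1 yq2]]|[q1 [s qs xq1] yq2]]; first by exists q1 => //; exists s.
by exists s => //; apply/IH; exists q1.
Qed.

Lemma safe_path_rcons q q' x a :
  safe_path q (rcons x a) q' <-> exists2 q1, safe_path q x q1 & q' \in delta_na A q1 a.
Proof.
rewrite -cats1 safe_path_cat; split=> -[q1 xq1 yq']; exists q1 => //=.
  by case: yq' => s q1s <-.
by exists q'.
Qed.

Lemma safe_word_cat q x y : safe_word q (x ++ y) -> safe_word q x.
Proof. by case=> q2 /safe_path_cat[q1 xq1 _]; exists q1. Qed.

Lemma safe_path_run_on q x q' : safe_path q x q' -> run_on q x q'.
Proof.
elim: x q => [|a x IH] q //=.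
by case=> s /delta_na_delta qs xs; exists s => //; apply: IH.
Qed.

Lemma connect_safe_path q q' : connect (na_edge A) q q' <-> exists x, safe_path q x q'.
Proof.
split=> [/connectP[r]|[x]].
  elim: r q => [|s r IH] q /=; first by move=> _ ->; exists [::].
  case/andP => /existsP[a qs] /IH r_path /r_path[x xq']; by exists (a :: x); exists s.
elim: x q => [|a x IH] q /=; first by move=> ->.
case=> s qs /IH; apply: connect_trans; apply: connect1; by apply/existsP; exists a.
Qed.

Hypothesis sfA : safe_det A.

Lemma delta_na_uniq q a s s' : s \in delta_na A q a -> s' \in delta_na A q a -> s = s'.
Proof. by move=> qs qs'; have /card_le1_eqP := sfA q a; apply. Qed.

Lemma safe_path_uniq q x q1 q2 : safe_path q x q1 -> safe_path q x q2 -> q1 = q2.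
Proof.
elim: x q => [|a x IH] q /=; first by move=> <- <-.
by case=> s qs xs [s' qs' xs']; apply: IH xs _; rewrite (delta_na_uniq qs qs').
Qed.

Lemma safe_prefixes_lang_at p w : (forall k, safe_word p (mkseq w k)) -> lang_at p w.
Proof.
move=> safe_pre.
have [r r_path] : exists r : nat -> st A, forall k, safe_path p (mkseq w k) (r k).
  by exists (fun k => sval (cid (safe_pre k))) => k; apply: svalP.
have rS k : r k.+1 \in delta_na A (r k) (w k).
  have := r_path k.+1; rewrite mkseqS => /safe_path_rcons[q1 wq1 q1r].
  by rewrite -(safe_path_uniq wq1 (r_path k)).
exists r; split; first by split=> [|k]; [exact: esym (r_path 0) | apply: delta_na_delta].
by exists 0 => k _; apply: delta_na_alpha.
Qed.

End SafePaths.

Section SafeSimulation.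
Variable Sigma : finType.
Implicit Types (A B C : tNCW Sigma) (a : Sigma).

Definition safe_le A B (p : st A) (q : st B) : Prop :=
  (forall w, lang_at p w <-> lang_at q w) /\ (forall x, safe_word p x -> safe_word q x).

Definition strong_eq A B (p : st A) (q : st B) : Prop := safe_le p q /\ safe_le q p.

Lemma safe_le_refl A (p : st A) : safe_le p p.
Proof. by []. Qed.

Lemma safe_le_trans A B C (p : st A) (q : st B) (r : st C) :
  safe_le p q -> safe_le q r -> safe_le p r.
Proof.
by move=> [pq spq] [qr sqr]; split=> [w|x /spq /sqr //]; rewrite pq qr.
Qed.

Lemma strong_eq_refl A (p : st A) : strong_eq p p.
Proof. by []. Qed.

Lemma strong_eq_sym A B (p : st A) (q : st B) : strong_eq p q -> strong_eq q p.
Proof. by case. Qed.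

Lemma strong_eq_trans A B C (p : st A) (q : st B) (r : st C) :
  strong_eq p q -> strong_eq q r -> strong_eq p r.
Proof. by move=> [pq qp] [qr rq]; split; apply: safe_le_trans; eassumption. Qed.

Lemma safe_le_step A B (p p' : st A) (q : st B) a :
  sem_det A -> sem_det B -> safe_det B ->
  safe_le p q -> p' \in delta_na A p a -> exists2 q', q' \in delta_na B q a & safe_le p' q'.
Proof.
move=> sdA sdB sfB [pq spq] pp'.
have [_ [q' qq' _]] : safe_word q [:: a] by apply: spq; exists p'; exists p'.
exists q' => //; split=> [w|x [p'' p'x]].
  rewrite (lang_at_residual sdA _ (delta_na_delta pp')).
  by rewrite (lang_at_residual sdB _ (delta_na_delta qq')).
have [q'' [s qs sx]] : safe_word q (a :: x) by apply: spq; exists p''; exists p'.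
by exists q''; rewrite (delta_na_uniq sfB qq' qs).
Qed.

Lemma strong_eq_step A B (p p' : st A) (q : st B) a :
  sem_det A -> sem_det B -> safe_det A -> safe_det B ->
  strong_eq p q -> p' \in delta_na A p a -> exists2 q', q' \in delta_na B q a & strong_eq p' q'.
Proof.
move=> sdA sdB sfA sfB [pq qp] pp'.
have [q' qq' p'q'] := safe_le_step sdA sdB sfB pq pp'.
have [p'' pp'' q'p''] := safe_le_step sdB sdA sfA qp qq'.
by exists q' => //; split; rewrite // (delta_na_uniq sfA pp' pp'').
Qed.

End SafeSimulation.

Section Follow.
Variables (Sigma : finType) (T : Type) (x0 : T) (step : T -> seq Sigma -> Sigma -> T).

Fixpoint follow_rev (v : seq Sigma) : T :=
  if v is a :: v' then step (follow_rev v') (rev v') a else x0.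

Definition follow (u : seq Sigma) : T := follow_rev (rev u).

Lemma follow_rcons u a : follow (rcons u a) = step (follow u) u a.
Proof. by rewrite /follow rev_rcons /= revK. Qed.

End Follow.

Section Quotient.
Variables (Sigma : finType) (A : tNCW Sigma) (R : {set st A}).
Hypotheses (sdA : sem_det A) (sfA : safe_det A).
Hypothesis R_dominating : forall q : st A, exists2 r, r \in R & safe_le q r.
Hypothesis R_safe_closed : forall r a r', r \in R -> r' \in delta_na A r a ->
  exists2 r'', r'' \in R & strong_eq r' r''.

Local Notation quot_st := {r : st A | r \in R}.
Implicit Types (p q : st A) (d : quot_st) (a : Sigma) (w : word Sigma).

Definition quot_delta d a : {set quot_st} :=
  [set d' | `[< forall w, lang_at (val d') w <-> lang_at (val d) (scons a w) >]].

Definition quot_alpha d a d' : bool :=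
  (d' \in quot_delta d a) &&
  ~~ `[< exists2 r', r' \in delta_na A (val d) a & strong_eq r' (val d') >].

Lemma quot_deltaP d a d' :
  reflect (forall w, lang_at (val d') w <-> lang_at (val d) (scons a w)) (d' \in quot_delta d a).
Proof. by rewrite inE; apply: asboolP. Qed.

Lemma quot_delta_safe_le p p' d d' a :
  safe_le p (val d) -> p' \in delta p a -> safe_le p' (val d') -> d' \in quot_delta d a.
Proof.
move=> [pd _] pp' [p'd' _]; apply/quot_deltaP => w.
by rewrite -p'd' (lang_at_residual sdA _ pp') pd.
Qed.

Lemma quot_dominating q : exists d, `[< safe_le q (val d) >].
Proof. by have [r rR qr] := R_dominating q; exists (Sub r rR); apply/asboolP. Qed.

Definition quot_dom q : quot_st := xchoose (quot_dominating q).

Lemma quot_dom_le q : safe_le q (val (quot_dom q)).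
Proof. exact/asboolP/(xchooseP (quot_dominating q)). Qed.

Lemma quot_delta_neq0 d a : quot_delta d a != set0.
Proof.
case/set0Pn: (@delta_ne _ A (val d) a) => p' dp'; apply/set0Pn; exists (quot_dom p').
exact: quot_delta_safe_le (safe_le_refl _) dp' (quot_dom_le p').
Qed.

Lemma quot_alpha_sub d a d' : quot_alpha d a d' -> d' \in quot_delta d a.
Proof. by case/andP. Qed.

Definition quot_aut : tNCW Sigma :=
  @TNCW Sigma quot_st (quot_dom (q0 A)) quot_delta quot_alpha quot_delta_neq0 quot_alpha_sub.

Lemma quot_safe_step d d' a q :
  d' \in quot_delta d a -> ~~ quot_alpha d a d' -> safe_le (val d) q ->
  exists2 q', q' \in delta_na A q a & safe_le (val d') q'.
Proof.
move=> dd'; rewrite /quot_alpha dd' negbK => /asboolP[r' dr' [_ d'r']] dq.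
have [q' qq' r'q'] := safe_le_step sdA sdA sfA dq dr'.
by exists q' => //; apply: safe_le_trans d'r' r'q'.
Qed.

Lemma quot_safe_run_lang (r : nat -> quot_st) w :
  (forall i, r i.+1 \in quot_delta (r i) (w i) /\ ~~ quot_alpha (r i) (w i) (r i.+1)) ->
  lang_at (val (r 0)) w.
Proof.
move=> r_safe; apply: (safe_prefixes_lang_at sfA) => k.
suff [q rq _] : exists2 q, safe_path (val (r 0)) (mkseq w k) q & safe_le (val (r k)) q.
  by exists q.
elim: k => [|k [q rq rkq]]; first by exists (val (r 0)).
have [rS r_nalpha] := r_safe k.
have [q' qq' rq'] := quot_safe_step rS r_nalpha rkq.
by exists q' => //; rewrite mkseqS; apply/safe_path_rcons; exists q.
Qed.

Lemma quot_lang_shift (r : nat -> quot_st) w k :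
  (forall i, r i.+1 \in quot_delta (r i) (w i)) ->
  lang_at (val (r k)) (shift k w) -> lang_at (val (r 0)) w.
Proof.
move=> rS; elim: k => [|k IH]; first by rewrite shift0.
by move/(quot_deltaP _ _ _ (rS k)); rewrite -shiftS.
Qed.

Lemma quot_lang_sub w : lang quot_aut w -> lang A w.
Proof.
move=> [r [[r0 rS] [N accN]]].
have rN : lang_at (val (r N)) (shift N w).
  have := @quot_safe_run_lang (fun i => r (N + i)) (shift N w); rewrite addn0; apply=> i.
  by rewrite /shift addnS; split; [apply: rS | apply: accN; apply: leq_addr].
by have := quot_lang_shift rS rN; rewrite r0 => /((quot_dom_le (q0 A)).1 w).2.
Qed.

(* The strategy of [quot_aut] shadows one of [A]: it stays above the state of [A] and moves
   safely whenever [A] does. *)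
Definition quot_good d a p p' d' : Prop :=
  [/\ d' \in quot_delta d a, safe_le p' (val d') &
      p' \in delta_na A p a -> ~~ quot_alpha d a d'].

Lemma quot_good_exists d a p p' :
  safe_le p (val d) -> p' \in delta p a -> exists d', quot_good d a p p' d'.
Proof.
move=> pd pp'; have [pp'_safe|pp'_alpha] := boolP (p' \in delta_na A p a); last first.
  exists (quot_dom p'); split; [exact: quot_delta_safe_le pd pp' (quot_dom_le p') |
    exact: quot_dom_le | by rewrite (negbTE pp'_alpha)].
have [s ds p's] := safe_le_step sdA sdA sfA pd pp'_safe.
have [r rR sr] := R_safe_closed (valP d) ds.
have p'r : safe_le p' r := safe_le_trans p's sr.1.
pose d' : quot_st := Sub r rR.
have dd' : d' \in quot_delta d a := quot_delta_safe_le (d' := d') pd pp' p'r.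
exists d'; split=> // _; rewrite /quot_alpha dd' negbK.
by apply/asboolP; exists s.
Qed.

Definition quot_next d a p p' : quot_st :=
  odflt d [pick d' | `[< quot_good d a p p' d' >]].

Lemma quot_nextP d a p p' :
  safe_le p (val d) -> p' \in delta p a -> quot_good d a p p' (quot_next d a p p').
Proof.
move=> pd pp'; rewrite /quot_next; case: pickP => [d' /asboolP //|no_good].
by have [d' /asboolT] := quot_good_exists pd pp'; rewrite no_good.
Qed.

Section QuotientStrategy.
Variable f : seq Sigma -> st A.
Hypotheses (f0 : f [::] = q0 A) (fS : forall u a, f (rcons u a) \in delta (f u) a).

Definition quot_strategy : seq Sigma -> quot_st :=
  follow (quot_dom (q0 A)) (fun d u a => quot_next d a (f u) (f (rcons u a))).

Lemma quot_strategy_le u : safe_le (f u) (val (quot_strategy u)).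
Proof.
elim/last_ind: u => [|u a IH]; first by rewrite f0; apply: quot_dom_le.
by rewrite /quot_strategy follow_rcons; case: (quot_nextP IH (fS u a)).
Qed.

Lemma quot_strategy_good u a :
  quot_good (quot_strategy u) a (f u) (f (rcons u a)) (quot_strategy (rcons u a)).
Proof. by rewrite {2}/quot_strategy follow_rcons; apply: quot_nextP (quot_strategy_le u) _. Qed.

Lemma quot_strategy_acc w :
  acc_seq A w (fun i => f (mkseq w i)) -> acc_seq quot_aut w (fun i => quot_strategy (mkseq w i)).
Proof.
case=> N accN; exists N => i /accN; rewrite /= mkseqS => f_safe.
by case: (quot_strategy_good (mkseq w i) (w i)) => _ _; apply; rewrite inE fS.
Qed.

End QuotientStrategy.

Lemma quot_GFG_lang : GFG A -> GFG quot_aut /\ forall w, lang quot_aut w <-> lang A w.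
Proof.
case=> f [f0 fS facc].
have gS u a : quot_strategy f (rcons u a) \in quot_delta (quot_strategy f u) a.
  by case: (quot_strategy_good f0 fS u a).
have lang_eq w : lang quot_aut w <-> lang A w.
  split=> [|/facc/(quot_strategy_acc f0 fS) acc]; first exact: quot_lang_sub.
  by exists (fun i => quot_strategy f (mkseq w i)); split=> //; split=> // i; rewrite mkseqS.
split=> //; exists (quot_strategy f); split=> // w /lang_eq/facc.
exact: quot_strategy_acc.
Qed.

Theorem safe_dominating_set_full : GFG A -> minimal_GFG A -> forall q, q \in R.
Proof.
move=> gA mA; have [gQ lang_eq] := quot_GFG_lang gA.
have := mA quot_aut gQ lang_eq; rewrite card_sig => card_le.
suff /eqP -> : R == setT by move=> q; rewrite inE.
by rewrite eqEcard subsetT cardsT (leq_trans card_le) // subset_leq_card // subsetT.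
Qed.

End Quotient.

Lemma limit_word (T : Type) (P : nat -> seq T) :
  (forall n, exists2 t, 0 < size t & P n.+1 = P n ++ t) ->
  exists w : nat -> T, forall n, mkseq w (size (P n)) = P n.
Proof.
move=> P_grows.
have P_prefix n m : n <= m -> exists t, P m = P n ++ t.
  move/subnK <-; elim: (m - n) => [|k [t Pk]]; first by exists [::]; rewrite cats0.
  by have [t' _ PS] := P_grows (k + n); exists (t ++ t'); rewrite addSn PS Pk catA.
have P_size n : n <= size (P n).
  elim: n => // n IH; have [t t_ne ->] := P_grows n.
  by rewrite size_cat -addn1 leq_add.
have [x0 _] : exists x0 : T, True.
  by have [[|x0 t] // _ _] := P_grows 0; exists x0.
have nth_P n m i : n <= m -> i < size (P n) -> nth x0 (P m) i = nth x0 (P n) i.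
  by move=> /P_prefix[t ->] ilt; rewrite nth_cat ilt.
exists (fun i => nth x0 (P i.+1) i) => n.
apply: (@eq_from_nth _ x0); rewrite size_mkseq // => i ilt; rewrite nth_mkseq //.
by rewrite -(nth_P n (maxn n i.+1)) ?leq_maxl // (nth_P i.+1) ?leq_maxr // (P_size i.+1).
Qed.

Section SafeSimulationExists.
Variable Sigma : finType.
Implicit Types (A B : tNCW Sigma) (w : word Sigma) (u v x z : seq Sigma).

Lemma strategy_lang_at A B (f : seq Sigma -> st B) (p : st A) v :
  sem_det A -> sem_det B -> (forall w, lang A w <-> lang B w) ->
  f [::] = q0 B -> (forall u a, f (rcons u a) \in delta (f u) a) ->
  run_on (q0 A) v p -> forall w, lang_at p w <-> lang_at (f v) w.
Proof.
move=> sdA sdB eqL f0 fS vp w; have fv := strategy_run_on fS v; rewrite f0 in fv.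
split=> [/(run_on_lang vp)/eqL|/(run_on_lang fv)/eqL]; first exact: run_on_residual.
exact: run_on_residual.
Qed.

Lemma normal_safe_loop A B (p : st A) (q : st B) : normal A ->
  ~ (forall x, safe_word p x -> safe_word q x) ->
  exists z, safe_path p z p /\ ~ safe_word q z.
Proof.
move=> nA /existsNP[x /not_implyP[[p' xp'] xq]].
have [y yp] := (connect_safe_path p' p).1 (nA _ _ ((connect_safe_path p p').2 (ex_intro _ x xp'))).
exists (x ++ y); split; first by apply/safe_path_cat; exists p'.
by move/safe_word_cat.
Qed.

Lemma strategy_safe_path B (f : seq Sigma -> st B) w k m :
  (forall u a, f (rcons u a) \in delta (f u) a) ->
  (forall i, k <= i -> ~~ alpha (f (mkseq w i)) (w i) (f (mkseq w i.+1))) ->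
  safe_path (f (mkseq w k)) (mkseq (shift k w) m) (f (mkseq w (k + m))).
Proof.
move=> fS f_safe; elim: m => [|m IH]; first by rewrite addn0.
rewrite mkseqS; apply/safe_path_rcons; exists (f (mkseq w (k + m))) => //.
by rewrite /shift addnS mkseqS inE fS /= -mkseqS f_safe ?leq_addr.
Qed.

Lemma safe_loops_word A (p : st A) u (ext : seq Sigma -> seq Sigma) :
  safe_det A -> run_on (q0 A) u p ->
  (forall v, run_on (q0 A) v p -> safe_path p (ext v) p /\ 0 < size (ext v)) ->
  exists2 w, lang A w & forall N, exists v, [/\ N <= size v, mkseq w (size v) = v,
    run_on (q0 A) v p & mkseq (shift (size v) w) (size (ext v)) = ext v].
Proof.
move=> sfA up ext_loop.
pose P n := iter n (fun v => v ++ ext (u ++ v)) [::].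
have P_loop n : safe_path p (P n) p /\ run_on (q0 A) (u ++ P n) p.
  elim: n => [|n [Pp uPp]]; first by rewrite cats0.
  have [extp _] := ext_loop _ uPp.
  split; first by apply/safe_path_cat; exists p.
  by rewrite /= catA; apply: run_on_cat uPp (safe_path_run_on extp).
have P_size n : n <= size (P n).
  by elim: n => // n IH; rewrite /= size_cat -addn1 leq_add // (ext_loop _ (P_loop n).2).2.
have [w wP] : exists w, forall n, mkseq w (size (u ++ P n)) = u ++ P n.
  apply: limit_word => n; exists (ext (u ++ P n)); rewrite /= ?catA //.
  exact: (ext_loop _ (P_loop n).2).2.
have wu : mkseq w (size u) = u by have := wP 0; rewrite cats0.
have wP' n : mkseq (shift (size u) w) (size (P n)) = P n by exact/mkseq_shift_cat/wP.
exists w => [|N].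
  rewrite -(wcat_mkseq_shift (size u) w) wu; apply: run_on_lang up _.
  apply: (safe_prefixes_lang_at sfA) => k.
  apply: (@safe_word_cat _ _ _ _ (mkseq (shift k (shift (size u) w)) (size (P k) - k))).
  by rewrite -mkseqD subnKC // wP'; exists p; exact: (P_loop k).1.
exists (u ++ P N); split; [|exact: wP|exact: (P_loop N).2|].
  by rewrite size_cat (leq_trans (P_size N)) ?leq_addl.
by apply: mkseq_shift_cat; rewrite -catA (wP N.+1).
Qed.

Theorem exists_safe_le A B :
  (forall q, reachable A q) -> normal A -> sem_det A -> safe_det A ->
  sem_det B -> GFG B -> (forall w, lang A w <-> lang B w) ->
  forall p : st A, exists q : st B, safe_le p q.
Proof.
move=> reachA nA sdA sfA sdB [f [f0 fS facc]] eqL p.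
have [u up] := reachable_run_on (reachA p).
apply: contrapT => no_le.
have [ext ext_spec] : {ext : seq Sigma -> seq Sigma & forall v,
    run_on (q0 A) v p -> safe_path p (ext v) p /\ ~ safe_word (f v) (ext v)}.
  apply: (@choice _ _ (fun v z => run_on (q0 A) v p -> safe_path p z p /\ ~ safe_word (f v) z)).
  move=> v; have [vp|] := pselect (run_on (q0 A) v p); last by exists [::].
  have [z zp] : exists z, safe_path p z p /\ ~ safe_word (f v) z.
    apply: normal_safe_loop nA _ => p_le; apply: no_le; exists (f v); split=> //.
    exact: strategy_lang_at sdA sdB eqL f0 fS vp.
  by exists z.
have ext_loop v : run_on (q0 A) v p -> safe_path p (ext v) p /\ 0 < size (ext v).
  move=> /ext_spec[extp no_safe]; split=> //.
  by rewrite lt0n size_eq0; apply: contra_notN no_safe => /eqP->; exists (f v).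
have [w wA w_loops] := safe_loops_word sfA up ext_loop.
have [N accN] := facc w ((eqL w).1 wA).
have [v [Nv wv vp ext_w]] := w_loops N.
have v_safe i : size v <= i -> ~~ alpha (f (mkseq w i)) (w i) (f (mkseq w i.+1)).
  by move=> vi; apply/accN/(leq_trans Nv).
have [_ []] := ext_spec _ vp.
have := strategy_safe_path (size (ext v)) fS v_safe.
by rewrite wv ext_w => ext_safe; eexists; exact: ext_safe.
Qed.

End SafeSimulationExists.

Lemma exists_maximal_above (T : finType) (le : T -> T -> Prop) :
  (forall x, le x x) -> (forall x y z, le x y -> le y z -> le x z) ->
  forall x, exists2 m, le x m & forall y, le m y -> le y m.
Proof.
move=> le_refl le_trans x; pose up m := #|[set y | `[< le m y >]]|.
have [m /asboolP xm m_min] := @arg_minnP _ x (fun m => `[< le x m >]) up (asboolT (le_refl x)).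
exists m => // y my; apply: contrapT => not_ym.
have : up y < up m.
  apply/proper_card/properP; split.
    by apply/subsetP => z; rewrite !inE => /asboolP yz; apply/asboolP/(le_trans _ _ _ my yz).
  by exists m; rewrite !inE; [apply/asboolP/le_refl | apply/asboolP].
by rewrite ltnNge m_min //; apply/asboolP/(le_trans _ _ _ xm my).
Qed.

Lemma strong_eq_eq (Sigma : finType) (A : tNCW Sigma) (p q : st A) :
  sem_det A -> safe_det A -> GFG A -> minimal_GFG A -> strong_eq p q -> p = q.
Proof.
move=> sdA sfA gA mA.
have ex_rep (r : st A) : exists r' : st A, `[< strong_eq r' r >] by exists r; apply/asboolP.
pose rep r := xchoose (ex_rep r).
have repP (r : st A) : strong_eq (rep r) r by apply/asboolP/(xchooseP (ex_rep r)).
have rep_eq (r1 r2 : st A) : strong_eq r1 r2 -> rep r1 = rep r2.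
  move=> r12; apply: eq_xchoose => r; apply/asboolP/asboolP => rr.
    exact: strong_eq_trans rr r12.
  exact: strong_eq_trans rr (strong_eq_sym r12).
pose R := [set r | rep r == r].
have repR (r : st A) : rep r \in R by rewrite inE; apply/eqP/rep_eq/repP.
have R_full : forall r, r \in R.
  apply: (@safe_dominating_set_full _ A R sdA sfA _ _ gA mA) => [r|r a r' _ _].
    by exists (rep r); [apply: repR | apply: (repP r).2].
  by exists (rep r'); [apply: repR | apply/strong_eq_sym/repP].
move=> pq; have := R_full p; have := R_full q; rewrite !inE => /eqP <- /eqP <-.
exact: rep_eq.
Qed.

Section Partner.
Variables (Sigma : finType) (A B : tNCW Sigma).
Hypotheses (reachA : forall q, reachable A q) (nA : normal A) (sdA : sem_det A) (sfA : safe_det A).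
Hypotheses (reachB : forall q, reachable B q) (nB : normal B) (sdB : sem_det B) (sfB : safe_det B).
Hypotheses (gA : GFG A) (gB : GFG B) (mA : minimal_GFG A).
Hypothesis eqL : forall w, lang A w <-> lang B w.

Lemma strong_eq_partner (p : st A) : exists q : st B, strong_eq p q.
Proof.
have eqL' w : lang B w <-> lang A w by rewrite eqL.
pose R := [set r : st A | `[< exists q : st B, strong_eq r q >]].
suff : p \in R by rewrite inE => /asboolP.
apply: (@safe_dominating_set_full _ A R sdA sfA _ _ gA mA) => [r|r a r' + rr'].
  have [m rm m_max] := exists_maximal_above (@safe_le_refl _ A) (@safe_le_trans _ A A A) r.
  exists m; rewrite // inE; apply/asboolP.
  have [q mq] := exists_safe_le reachA nA sdA sfA sdB gB eqL m.
  have [t qt] := exists_safe_le reachB nB sdB sfB sdA gA eqL' q.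
  by exists q; split; last apply: safe_le_trans qt (m_max _ (safe_le_trans mq qt)).
rewrite inE => /asboolP[q rq].
have [q' _ r'q'] := strong_eq_step sdA sdB sfA sfB rq rr'.
by exists r'; rewrite ?inE; [apply/asboolP; exists q' | apply: strong_eq_refl].
Qed.

End Partner.

Section Transitions.
Variables (Sigma : finType) (A B : tNCW Sigma).
Hypotheses (sdA : sem_det A) (sdB : sem_det B).
Variables (p p' : st A) (q q' : st B) (a : Sigma).
Hypotheses (pq : strong_eq p q) (p'q' : strong_eq p' q').

Lemma strong_eq_delta_na :
  safe_det A -> safe_det B -> (forall q1 q2 : st B, strong_eq q1 q2 -> q1 = q2) ->
  p' \in delta_na A p a -> q' \in delta_na B q a.
Proof.
move=> sfA sfB eqB pp'; have [q'' qq'' p'q''] := strong_eq_step sdA sdB sfA sfB pq pp'.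
by rewrite (eqB q' q'' (strong_eq_trans (strong_eq_sym p'q') p'q'')).
Qed.

Lemma strong_eq_delta_a :
  alpha_homogenous A -> alpha_max_up_to_hom B ->
  p' \in delta_a A p a -> q' \in delta_a B q a.
Proof.
move=> homA [_ maxB] pp'.
have pp'_in : p' \in delta p a by move: pp'; rewrite inE => /andP[].
have p_unsafe : delta_na A p a = set0.
  by case: (homA p a) => // na0; rewrite na0 inE in pp'.
have q_unsafe : delta_na B q a = set0.
  by apply/delta_na_eq0 => /pq.2.2; apply/delta_na_eq0.
have q'_in : q' \in delta q a.
  apply: (maxB _ _ q_unsafe); case/set0Pn: (@delta_ne _ B q a) => s qs; exists s; split=> // w.
  change (lang_at q' w <-> lang_at s w); rewrite -p'q'.1.1.
  by rewrite (lang_at_residual sdA _ pp'_in) pq.1.1 -(lang_at_residual sdB _ qs).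
exact: delta_na_eq0_delta_a q_unsafe q'_in.
Qed.

End Transitions.

Lemma GFG_init (Sigma : finType) (A : tNCW Sigma) : GFG_state A (q0 A) -> GFG A.
Proof. by case=> f fP; exists f. Qed.

Theorem mainTheorem4 (Sigma : finType) (C1 C2 : tNCW Sigma) :
  nice C1 -> nice C2 ->
  (forall w, lang C1 w <-> lang C2 w) ->
  minimal_GFG C1 -> minimal_GFG C2 ->
  alpha_max_up_to_hom C1 -> alpha_max_up_to_hom C2 ->
  isomorphic C1 C2.
Proof.
move=> [reach1 gs1 n1 sf1 sd1] [reach2 gs2 n2 sf2 sd2] eqL m1 m2 max1 max2.
have [g1 g2] := (GFG_init (gs1 (q0 C1)), GFG_init (gs2 (q0 C2))).
have eq1 := fun p q : st C1 => @strong_eq_eq _ _ p q sd1 sf1 g1 m1.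
have eq2 := fun p q : st C2 => @strong_eq_eq _ _ p q sd2 sf2 g2 m2.
have [kappa kP] := choice (strong_eq_partner reach1 n1 sd1 sf1 reach2 n2 sd2 sf2 g1 g2 m1 eqL).
have kP' (p : st C1) := strong_eq_sym (kP p).
have kappa_inj : injective kappa.
  by move=> p1 p2 k12; apply: eq1; apply: strong_eq_trans (kP p1) _; rewrite k12.
exists kappa; split=> [|p p' a|p p' a].
- by apply: inj_card_bij kappa_inj _; apply: m2 g1 eqL.
- split; first exact: (strong_eq_delta_na sd1 sd2 (kP p) (kP p') sf1 sf2 eq2).
  exact: (strong_eq_delta_na sd2 sd1 (kP' p) (kP' p') sf2 sf1 eq1).
- split; first exact: (strong_eq_delta_a sd1 sd2 (kP p) (kP p') max1.1 max2).
  exact: (strong_eq_delta_a sd2 sd1 (kP' p) (kP' p') max2.1 max1).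
Qed.
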